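(* Let $q=2^h$ with $h>1$. Then there exists no finite group whose irreducible complex character degrees, with multiplicity, are $1$ ($q-1$ times), $q-1$ (once), and $q$ ($q-1$ times). *)

From mathcomp Require Import all_boot all_order all_algebra all_fingroup all_solvable all_field all_character.
Set Implicit Arguments. Unset Strict Implicit. Unset Printing Implicit Defensive.
Import GRing.Theory Num.Theory.
Local Open Scope ring_scope.

Definition irr_degrees (gT : finGroupType) (G : {group gT}) : seq algC :=
  [seq 'chi[G]_i 1%g | i : Iirr G].

Definition target_degrees (q : nat) : seq algC :=
  nseq q.-1 1 ++ [:: (q.-1)%:R] ++ nseq q.-1 q%:R.

From mathcomp Require Import all_boot all_order all_algebra all_fingroup all_solvable all_field all_character.
From mathcomp Require Import zify ring.
Set Implicit Arguments. Unset Strict Implicit. Unset Printing Implicit Defensive.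
Import GRing.Theory Num.Theory.

(* Let [chi] be the unique irreducible character of degree [q - 1] and
   [E = ker chi].  Counting degrees gives [|G| = (q - 1) q (q + 1)] and
   [|G : G'| = q - 1]; by uniqueness [chi] is fixed by the linear characters,
   so it vanishes off [G'] and [chi^2 = sum lambda + (q - 2) chi].  Hence [chi]
   takes only the values [q - 1] and [-1] on [G'], and [|E| = q + 1].  The
   orthogonality of the columns of [1] and [g] evaluates [theta], the sum of
   the characters of degree [q], on [G']: it is [-(q - 1)] on [E^#] and [0] on
   [G' \ E].  The restriction of [theta] to [G'] then has norm [(q - 1)^2] and
   multiplicities divisible by [q - 1], so it is [q - 1] times an irreducible
   character; thus all characters of degree [q] vanish on [G' \ E], and the
   second orthogonality relation gives [|C_G(g)| = q] there.  Now the class of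
   an involution of [G' \ E] fills [G' \ E], so all its elements are
   involutions; they all invert [E], and the odd-order group [E] must be
   trivial. *)

Section InvolutionsOutsideNormalSubgroup.
Local Open Scope group_scope.
Variable gT : finGroupType.
Implicit Types (G D E : {group gT}) (e t v w y : gT).

Lemma conjg_eq_invg_of_involutions w e :
  w * w = 1 -> (w * e) * (w * e) = 1 -> e ^ w = e^-1.
Proof.
move=> ww1 we1; have w_inv : w^-1 = w by apply/eqP; rewrite eq_invg_mul ww1.
by rewrite conjgE w_inv mulgA -(mulgK e (w * e * w)) -(mulgA (w * e)) we1 mul1g.
Qed.

(* Two involutions [t], [v] outside [E] with [t * v] also outside [E] all
   invert [E], so [t * v] both inverts and centralises it. *)
Lemma odd_trivg_inverted_by_involutions D E :
  E \subset D -> odd #|E| -> (#|E| < #|D :\: E|)%N ->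
  {in D :\: E, forall y, y * y = 1} -> E :=: 1.
Proof.
move=> sED oddE ltE_DE invDE.
have [t DEt] : exists t, t \in D :\: E.
  by apply/set0Pn; rewrite -card_gt0 (leq_ltn_trans _ ltE_DE).
have [v DEv tEv] : exists2 v, v \in D :\: E & v \notin t *: E.
  apply/subsetPn; apply: contraTN ltE_DE => /subset_leq_card.
  by rewrite card_lcoset leqNgt.
have t_inv : t^-1 = t by apply/eqP; rewrite eq_invg_mul invDE.
have DEtv : t * v \in D :\: E.
  have [/setDP[Dt _] /setDP[Dv _]] := (DEt, DEv).
  by rewrite inE (groupM Dt Dv) andbT; rewrite mem_lcoset t_inv in tEv.
apply/trivgP/subsetP => e Ee; rewrite inE -order_eq1.
have e_inv y : y \in D :\: E -> e ^ y = e^-1.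
  move=> DEy; apply: conjg_eq_invg_of_involutions; first exact: invDE.
  apply: invDE; case/setDP: DEy => Dy nEy.
  by rewrite inE groupMr // nEy groupM // (subsetP sED).
have ee1 : e * e = 1.
  apply/eqP; rewrite -eq_invg_mul -[X in X == _](e_inv _ DEtv).
  by rewrite conjgM e_inv // conjVg e_inv // invgK.
have o_dvd2 : #[e] %| 2 by rewrite order_dvdn expg2 ee1.
have o_odd : odd #[e] := dvdn_odd (order_dvdG Ee) oddE.
by move: (#[e]) o_dvd2 o_odd => [|[|[|n]]] // /dvdn_leq->.
Qed.

Lemma involution_class_fill D E G t :
  D <| G -> E <| G -> t \in D :\: E -> t * t = 1 ->
  (#|D :\: E| <= #|t ^: G|)%N -> {in D :\: E, forall y, y * y = 1}.
Proof.
move=> nsDG nsEG DEt tt1 le_DE_tG y.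
have sub_tG : t ^: G \subset D :\: E.
  apply/subsetP => _ /imsetP[x Gx ->].
  have [nDx nEx] := (subsetP (normal_norm nsDG) x Gx, subsetP (normal_norm nsEG) x Gx).
  by rewrite in_setD !memJ_norm // -in_setD.
have <- : t ^: G = D :\: E by apply/eqP; rewrite eqEcard sub_tG.
by case/imsetP=> x _ ->; rewrite -conjMg tt1 conj1g.
Qed.

Lemma no_normal_pair_with_centralizers G D E q :
  (2 < q)%N -> ~~ odd q -> D <| G -> E <| G -> E \subset D ->
  #|G| = (q.-1 * (q * q.+1))%N -> #|D| = (q * q.+1)%N -> #|E| = q.+1 ->
  {in D :\: E, forall g, #|'C_G[g]| = q} -> False.
Proof.
move=> q_gt2 q_even nsDG nsEG sED oG oD oE cent_q.
have oDE : #|D :\: E| = (q.-1 * q.+1)%N.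
  by rewrite cardsD (setIidPr sED) oD oE; lia.
have oddE : odd #|E| by rewrite oE /= q_even.
have [t Dt ot] : {t | t \in D & #[t] = 2}.
  by apply: Cauchy => //; rewrite oD dvdn2 oddM /= negb_and orbN.
have DEt : t \in D :\: E.
  rewrite inE Dt andbT; apply: contraL oddE => /order_dvdG.
  by rewrite ot dvdn2.
have tt1 : t * t = 1 by apply/eqP; rewrite -expg2 -ot expg_order.
have o_tG : #|t ^: G| = (q.-1 * q.+1)%N.
  have := Lagrange (subsetIl G 'C[t]); rewrite index_cent1 cent_q // oG => oGq.
  by apply/eqP; rewrite -(eqn_pmul2l (_ : 0 < q)%N) ?oGq //; lia.
have invDE : {in D :\: E, forall y, y * y = 1}.
  by apply: (involution_class_fill nsDG nsEG DEt tt1); rewrite oDE o_tG.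
have ltE_DE : (#|E| < #|D :\: E|)%N by rewrite oE oDE; nia.
have := odd_trivg_inverted_by_involutions sED oddE ltE_DE invDE.
by move/eqP; rewrite trivg_card1 oE eqSS; lia.
Qed.

End InvolutionsOutsideNormalSubgroup.

Local Open Scope ring_scope.

Lemma nat_sqr_decomp m a b :
  (0 < m)%N -> (m.+1 * a + m * b.+1 = m * m)%N -> a = 0%N /\ b = m.-1.
Proof.
move=> m_gt0 eq_mm.
have : (m %| m.+1 * a)%N.
  by rewrite -(dvdn_addl _ (dvdn_mulr b.+1 (dvdnn m))) eq_mm dvdn_mulr.
rewrite Gauss_dvdr ?coprimenS // => /dvdnP[k def_a].
have : (m.+1 * k + b.+1 = m)%N.
  by apply/eqP; rewrite -(eqn_pmul2l m_gt0); apply/eqP; rewrite def_a in eq_mm; nia.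
rewrite def_a; case: k {def_a eq_mm} => [|k]; first by rewrite !(mul0n, muln0); lia.
by rewrite mulnS; lia.
Qed.

Section IrrOfUniqueDegree.
Variables (gT : finGroupType) (G : {group gT}) (i : Iirr G).
Hypothesis deg_uniq : forall j, 'chi_j 1%g = 'chi_i 1%g -> j = i.

Lemma lin_char_mul_irr_uniq_deg lambda :
  lambda \is a linear_char -> lambda * 'chi_i = 'chi_i.
Proof.
move=> lin; have /irrP[j def_j] := mul_lin_irr lin (mem_irr i).
by rewrite def_j (@deg_uniq j) // -def_j cfunE lin_char1 // mul1r.
Qed.

Lemma cfConjC_irr_uniq_deg : ('chi_i)^*%CF = 'chi_i.
Proof.
have /irrP[j def_j] := cfConjC_irr i.
by rewrite def_j (@deg_uniq j) // -def_j cfConjC_char1 ?irr_char.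
Qed.

Lemma irr_uniq_deg_vanish g : g \notin G^`(1)%g -> 'chi_i g = 0.
Proof.
have [Gg | /cfun0-> //] := boolP (g \in G).
rewrite -cap_cfker_lin_irr; apply: contraNeq => nz_g.
apply/bigcapP => j lin_j; rewrite cfkerEirr inE lin_char1 //.
have := congr1 (fun phi : 'CF(G) => phi g) (lin_char_mul_irr_uniq_deg lin_j).
by rewrite cfunE -{2}['chi_i g]mul1r => /(mulIf nz_g)->.
Qed.

End IrrOfUniqueDegree.

Section CharacterDecomposition.
Variables (gT : finGroupType) (H : {group gT}).

Lemma char_summand_scale_irr (I : finType) (P : pred I) (phi : I -> 'CF(H)) a k :
  (forall i, P i -> phi i \is a character) ->
  \sum_(i | P i) phi i = a *: 'chi_k ->
  forall i, P i -> phi i = '[phi i, 'chi_k] *: 'chi_k.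
Proof.
move=> phiN sum_phi i Pi.
rewrite {1}[phi i]cfun_sum_cfdot (bigD1 k) //= big1 ?addr0 // => l nlk.
have : \sum_(j | P j) '[phi j, 'chi_l] = 0.
  by rewrite -cfdot_suml sum_phi cfdotZl cfdot_irr eq_sym (negbTE nlk) mulr0.
move/psumr_eq0P => -> //; first by rewrite scale0r.
by move=> j Pj; rewrite natr_ge0 ?Cnat_cfdot_char ?phiN ?irr_char.
Qed.

(* Writing the multiplicities as [m_k * n], [sum_k m_k ^ 2 = 1] forces a single
   nonzero [m_k], equal to [1]. *)
Lemma char_scale_irr_of_norm (phi : 'CF(H)) n :
  phi \is a character -> (0 < n)%N -> '[phi] = (n ^ 2)%:R ->
  (forall k, exists m, '[phi, 'chi_k] = (m * n)%:R) ->
  exists k, phi = n%:R *: 'chi_k.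
Proof.
move=> phiN n_gt0 norm_phi dvd_coef.
have nz_n2 : n%:R ^+ 2 != 0 :> algC by rewrite expf_neq0 // pnatr_eq0 -lt0n.
pose F k := '[phi, 'chi_k] ^+ 2 / n%:R ^+ 2.
have FE k m : '[phi, 'chi_k] = (m * n)%:R -> F k = (m ^ 2)%:R.
  by move=> coef_k; rewrite /F coef_k natrM exprMn mulfK // natrX.
have F_nat k : F k \is a Num.nat by have [m /FE->] := dvd_coef k.
have norm_sum : '[phi] = \sum_k '[phi, 'chi_k] ^+ 2.
  rewrite cfdot_sum_irr; apply: eq_bigr => k _.
  by rewrite conj_natr ?Cnat_cfdot_char ?irr_char.
have sumF : \sum_k F k = 1 by rewrite -mulr_suml -norm_sum norm_phi natrX mulfV.
have [k0 [_ Fk0 Fk]] := natr_sum_eq1 (fun k _ => F_nat k) sumF.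
exists k0; rewrite {1}[phi]cfun_sum_cfdot (bigD1 k0) //= big1 ?addr0.
  have [m coef_k0] := dvd_coef k0; rewrite coef_k0.
  move/eqP: Fk0; rewrite (FE _ _ coef_k0) -[1]/(1%:R) eqr_nat => /eqP m2_1.
  by rewrite (_ : m = 1%N) ?mul1n //; nia.
move=> k nk0; have [m coef_k] := dvd_coef k.
move/eqP: (Fk k nk0 isT); rewrite (FE _ _ coef_k) pnatr_eq0 => /eqP m2_0.
by rewrite coef_k (_ : m = 0%N) ?scale0r //; nia.
Qed.

End CharacterDecomposition.

Section TargetDegrees.
Variables (gT : finGroupType) (G : {group gT}) (q : nat).
Hypotheses (q_ge4 : (4 <= q)%N) (q_even : ~~ odd q).
Hypothesis degG : perm_eq (irr_degrees G) (target_degrees q).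

Local Notation d i := ('chi[G]_i 1%g).

Lemma sum_irr_deg (F : algC -> algC) :
  \sum_i F (d i) = F 1 *+ q.-1 + F (q.-1)%:R + F q%:R *+ q.-1.
Proof.
rewrite -(big_image _ _ _ (fun x => true)) -/(irr_degrees G) (perm_big _ degG).
by rewrite !big_cat /= !big_nseq big_seq1 !iter_addr_0 addrA.
Qed.

Lemma card_irr_deg (P : pred algC) :
  #|[pred i | P (d i)]|%:R =
    (P 1)%:R *+ q.-1 + (P (q.-1)%:R)%:R + (P q%:R)%:R *+ q.-1 :> algC.
Proof.
rewrite -(sum_irr_deg (fun y => (P y)%:R)) -sum1_card natr_sum big_mkcond /=.
by apply: eq_bigr => i _; rewrite inE; case: (P _).
Qed.

Fact one_neq_q1 : (1 == (q.-1)%:R :> algC) = false.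
Proof. by rewrite -[1]/(1%:R) eqr_nat; apply/eqP; lia. Qed.
Fact one_neq_q : (1 == q%:R :> algC) = false.
Proof. by rewrite -[1]/(1%:R) eqr_nat; apply/eqP; lia. Qed.
Fact q1_neq_q : ((q.-1)%:R == q%:R :> algC) = false.
Proof. by rewrite eqr_nat; apply/eqP; lia. Qed.
Let deg_neq := (one_neq_q1, one_neq_q, q1_neq_q,
  etrans (eq_sym _ _) one_neq_q1, etrans (eq_sym _ _) one_neq_q,
  etrans (eq_sym _ _) q1_neq_q).

Lemma irr_deg_cases i : [\/ d i = 1, d i = (q.-1)%:R | d i = q%:R].
Proof.
have : d i \in target_degrees q by rewrite -(perm_mem degG) (image_f (fun j => d j)).
rewrite !mem_cat !mem_nseq !inE.
by case/or3P=> [/andP[_ /eqP] | /eqP | /andP[_ /eqP]];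
  [constructor 1 | constructor 2 | constructor 3].
Qed.

Lemma card_irr_deg1 : #|[pred i | d i == 1]| = q.-1.
Proof.
apply/eqP; rewrite -(eqr_nat algC) (card_irr_deg (pred1 _)) /= eqxx !deg_neq.
by rewrite ?mul0rn ?addr0.
Qed.

Lemma card_irr_deg_q1 : #|[pred i | d i == (q.-1)%:R]| = 1%N.
Proof.
apply/eqP; rewrite -(eqr_nat algC) (card_irr_deg (pred1 _)) /= eqxx !deg_neq.
by rewrite ?mul0rn ?addr0 ?add0r.
Qed.

Lemma card_irr_deg_q : #|[pred i | d i == q%:R]| = q.-1.
Proof.
apply/eqP; rewrite -(eqr_nat algC) (card_irr_deg (pred1 _)) /= eqxx !deg_neq.
by rewrite ?mul0rn ?add0r.
Qed.

Lemma irr_deg_q1_exists : {i0 | d i0 = (q.-1)%:R}.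
Proof.
case: (pickP [pred i | d i == (q.-1)%:R]) => [i /eqP | none]; first by exists i.
by have := card_irr_deg_q1; rewrite (eq_card0 none).
Qed.

Lemma irr_deg_q1_uniq i j : d i = (q.-1)%:R -> d j = (q.-1)%:R -> i = j.
Proof.
move=> deg_i deg_j; have /card_le1_eqP : (#|[pred i | d i == (q.-1)%:R]| <= 1)%N.
  by rewrite card_irr_deg_q1.
by apply; rewrite inE /= ?deg_i ?deg_j.
Qed.

Lemma lin_irrE i : ('chi_i \is a linear_char) = (d i == 1).
Proof. by rewrite qualifE /= irr_char. Qed.

Lemma card_irr_lin : #|[pred i | 'chi[G]_i \is a linear_char]| = q.-1.
Proof. by rewrite -card_irr_deg1; apply: eq_card => i; rewrite !inE lin_irrE. Qed.

Lemma card_G : #|G| = (q.-1 * (q * q.+1))%N.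
Proof.
apply/eqP; rewrite -(eqr_nat algC) -irr_sum_square (sum_irr_deg (fun x => x ^+ 2)).
by rewrite expr1n -!natrX -!mulrnA -!natrD eqr_nat; apply/eqP; nia.
Qed.

Section CharacterOfDegreeQ1.
Variable i0 : Iirr G.
Hypothesis deg_i0 : d i0 = (q.-1)%:R.

Local Notation chi := 'chi[G]_i0.
Local Notation G' := (G^`(1))%g.
Local Notation E := (cfker chi).

Let chi_deg_uniq j : d j = d i0 -> j = i0.
Proof. by rewrite deg_i0 => deg_j; apply: irr_deg_q1_uniq. Qed.

Fact q_neq0 : q%:R != 0 :> algC.
Proof. by rewrite pnatr_eq0 -lt0n; lia. Qed.

Fact q1_neq0 : (q.-1)%:R != 0 :> algC.
Proof. by rewrite pnatr_eq0 -lt0n; lia. Qed.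

Lemma sum_irr_split (V : zmodType) (f : Iirr G -> V) :
  \sum_i f i = \sum_(i | d i == 1) f i + f i0 + \sum_(i | d i == q%:R) f i.
Proof.
rewrite (bigID [pred i | d i == 1]) /= -addrA; congr (_ + _).
rewrite (bigD1 i0) /=; last by rewrite deg_i0 deg_neq.
congr (_ + _); apply: eq_bigl => i.
have [deg_i|deg_i|deg_i] := irr_deg_cases i; rewrite deg_i ?eqxx ?deg_neq ?andbT //=.
  by rewrite (irr_deg_q1_uniq deg_i deg_i0) eqxx.
by apply/eqP=> def_i; move: deg_i; rewrite def_i deg_i0 => /eqP; rewrite deg_neq.
Qed.

Lemma lin_irr_der1 i g : d i = 1 -> g \in G' -> 'chi_i g = 1.
Proof.
move=> deg_i G'g; have /lin_char_der1 : 'chi_i \is a linear_char by rewrite lin_irrE deg_i.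
by move/subsetP/(_ g G'g); rewrite cfkerEirr inE deg_i => /eqP.
Qed.

Lemma cfdot_chi2_lin i : d i = 1 -> '[chi * chi, 'chi_i] = 1.
Proof.
move=> deg_i; rewrite -(cfnorm_irr i0) !cfdotE; congr (_ * _).
have chi_real x : (chi x)^* = chi x.
  by rewrite -cfConjCE (cfConjC_irr_uniq_deg chi_deg_uniq).
apply: eq_bigr => x _; rewrite cfunE chi_real -mulrA.
have lin_i : 'chi_i \is a linear_char by rewrite lin_irrE deg_i.
have := congr1 (fun phi : 'CF(G) => phi x) (lin_char_mul_irr_uniq_deg chi_deg_uniq lin_i).
rewrite cfunE; have [-> | nz_x] := eqVneq (chi x) 0; first by rewrite !mul0r.
by rewrite -{2}[chi x]mul1r => /(mulIf nz_x)->; rewrite conjC1 mulr1.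
Qed.

(* Since the linear characters fix [chi], [chi * chi] contains each of them
   once, and comparing degrees leaves room only for [q - 2] copies of [chi]. *)
Lemma chi2_decomp : chi * chi = \sum_(i | d i == 1) 'chi_i + (q.-2)%:R *: chi.
Proof.
have coefN j : '[chi * chi, 'chi_j] \is a Num.nat.
  by rewrite Cnat_cfdot_char ?rpredM ?irr_char.
have [c def_c] := natrP (coefN i0).
have [a def_a] : exists a, \sum_(j | d j == q%:R) '[chi * chi, 'chi_j] = a%:R.
  by apply/natrP; rewrite rpred_sum.
have deg_chi2 : (chi * chi) 1%g = \sum_i '[chi * chi, 'chi_i] * d i.
  by rewrite {1}[chi * chi]cfun_sum_cfdot sum_cfunE; apply: eq_bigr => i _; rewrite cfunE.
rewrite sum_irr_split cfunE deg_i0 def_c in deg_chi2.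
rewrite (eq_bigr (fun=> 1)) ?sumr_const ?card_irr_deg1 in deg_chi2; last first.
  by move=> i /eqP deg_i; rewrite cfdot_chi2_lin ?deg_i ?mulr1.
rewrite (eq_bigr (fun j => '[chi * chi, 'chi_j] * q%:R)) in deg_chi2; last first.
  by move=> j /eqP->.
rewrite -mulr_suml def_a in deg_chi2.
have deg_eq : (q * a + q.-1 * c.+1 = q.-1 * q.-1)%N.
  by apply/eqP; rewrite -(eqr_nat algC) !natrD !natrM deg_chi2 mulrSr; apply/eqP; ring.
have [a0 c_q2] : a = 0%N /\ c = q.-2.
  by apply: nat_sqr_decomp; [lia | rewrite prednK ?deg_eq //; lia].
rewrite {1}[chi * chi]cfun_sum_cfdot sum_irr_split def_c c_q2.
rewrite [\sum_(i | d i == q%:R) _]big1 ?addr0 => [|j deg_j].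
  by congr (_ + _); apply: eq_bigr => i /eqP deg_i; rewrite cfdot_chi2_lin ?scale1r.
move: def_a; rewrite a0 => /psumr_eq0P-> //; first by rewrite scale0r.
by move=> k _; rewrite natr_ge0.
Qed.

Lemma chi_der1_values g : g \in G' -> chi g = (q.-1)%:R \/ chi g = -1.
Proof.
move=> G'g; have := congr1 (fun phi : 'CF(G) => phi g) chi2_decomp.
rewrite !cfunE sum_cfunE (eq_bigr (fun=> 1)); last first.
  by move=> i /eqP deg_i; rewrite lin_irr_der1.
rewrite sumr_const card_irr_deg1 => /eqP; rewrite -subr_eq0.
have -> : (q.-2)%:R = (q.-1)%:R - 1 :> algC.
  by rewrite (_ : q.-1 = (q.-2).+1) ?mulrS; [ring | lia].
have -> : chi g * chi g - (1 *+ q.-1 + ((q.-1)%:R - 1) * chi g) =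
          (chi g - (q.-1)%:R) * (chi g + 1) by ring.
by rewrite mulf_eq0 subr_eq0 addr_eq0 => /orP[/eqP|/eqP]; [left | right].
Qed.

Lemma cfker_chiE g : (g \in E) = (chi g == (q.-1)%:R).
Proof. by rewrite cfkerEirr inE deg_i0. Qed.

Lemma cfker_chi_sub_der1 : E \subset G'.
Proof.
apply/subsetP => g; rewrite cfker_chiE; apply: contraLR.
by move/(irr_uniq_deg_vanish chi_deg_uniq)->; rewrite eq_sym q1_neq0.
Qed.

Lemma chi_der1_out_cfker g : g \in G' -> g \notin E -> chi g = -1.
Proof. by move=> G'g; rewrite cfker_chiE; case: (chi_der1_values G'g) => ->; rewrite ?eqxx. Qed.

Lemma card_der1 : #|G'| = (q * q.+1)%N.
Proof.
have := Lagrange (der_sub 1 G); rewrite -card_lin_irr card_irr_lin card_G mulnC.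
by move/eqP; rewrite eqn_mul2l => /orP[/eqP | /eqP //]; lia.
Qed.

(* [chi] is orthogonal to the trivial character and vanishes off [G'], so
   [(q - 1) #|E| = #|G' :\: E|]. *)
Lemma card_cfker_chi : #|E| = q.+1.
Proof.
have i0_neq0 : i0 != 0.
  by apply/eqP => i0_0; move: deg_i0; rewrite i0_0 irr0 cfun11 => /eqP; rewrite deg_neq.
have sum_chi : \sum_(x in G) chi x = 0.
  have := cfdot_irr i0 0; rewrite (negbTE i0_neq0) cfdotE => /eqP.
  rewrite mulf_eq0 invr_eq0 (negbTE (neq0CG G)) /= => /eqP sum0.
  by rewrite -[RHS]sum0; apply: eq_bigr => x Gx; rewrite irr0 cfun1E Gx conjC1 mulr1.
rewrite (big_setID G') /= (setIidPr (der_sub 1 G)) in sum_chi.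
rewrite [X in _ + X]big1 ?addr0 in sum_chi; last first.
  by move=> x /setDP[_ G'x]; rewrite (irr_uniq_deg_vanish chi_deg_uniq).
rewrite (big_setID E) /= (setIidPr cfker_chi_sub_der1) in sum_chi.
rewrite (eq_bigr (fun=> (q.-1)%:R)) in sum_chi; last by move=> x; rewrite cfker_chiE => /eqP.
rewrite [X in _ + X](eq_bigr (fun=> -1)) in sum_chi; last first.
  by move=> x /setDP[G'x nEx]; rewrite chi_der1_out_cfker.
rewrite !sumr_const cardsD (setIidPr cfker_chi_sub_der1) card_der1 in sum_chi.
have le_E : (#|E| <= q * q.+1)%N by rewrite -card_der1 subset_leq_card ?cfker_chi_sub_der1.
move/eqP: sum_chi; rewrite mulNrn -mulrnA natrB // subr_eq0 -natrB // eqr_nat => /eqP.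
by nia.
Qed.

Local Notation theta g := (\sum_(j | d j == q%:R) 'chi_j g).

Lemma orthogonality_col1 g : g \in G -> g != 1%g ->
  \sum_(i | d i == 1) 'chi_i g + (q.-1)%:R * chi g + q%:R * theta g = 0.
Proof.
move=> Gg ntg; have := second_orthogonality_relation g (group1 G).
rewrite class1G inE (negbTE ntg) mulr0n sum_irr_split deg_i0 conjC_nat.
rewrite (eq_bigr (fun i => 'chi_i g)); last by move=> i /eqP->; rewrite conjC1 mulr1.
rewrite [X in _ + X](eq_bigr (fun i => q%:R * 'chi_i g)); last first.
  by move=> i /eqP->; rewrite conjC_nat mulrC.
by rewrite -mulr_sumr mulrC.
Qed.

Lemma theta_cfker g : g \in E -> g != 1%g -> theta g = - (q.-1)%:R.
Proof.
move=> Eg ntg; have G'g := subsetP cfker_chi_sub_der1 g Eg.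
have := orthogonality_col1 (subsetP (der_sub 1 G) g G'g) ntg.
rewrite (eq_bigr (fun=> 1)) => [|i /eqP deg_i]; last by rewrite lin_irr_der1.
rewrite sumr_const card_irr_deg1; move: Eg; rewrite cfker_chiE => /eqP->.
move/eqP; rewrite addrC addr_eq0 => /eqP theta_g.
apply: (mulfI q_neq0); rewrite theta_g.
have -> : q%:R = (q.-1)%:R + 1 :> algC by rewrite natr1 prednK //; lia.
ring.
Qed.

Lemma theta_der1_out_cfker g : g \in G' -> g \notin E -> theta g = 0.
Proof.
move=> G'g nEg; have ntg : g != 1%g by apply: contraNneq nEg => ->.
have := orthogonality_col1 (subsetP (der_sub 1 G) g G'g) ntg.
rewrite (eq_bigr (fun=> 1)) => [|i /eqP deg_i]; last by rewrite lin_irr_der1.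
rewrite sumr_const card_irr_deg1 chi_der1_out_cfker // mulrN1 addrN add0r => /eqP.
by rewrite mulf_eq0 (negbTE q_neq0) => /eqP.
Qed.

Lemma theta1 : theta 1%g = q%:R *+ q.-1.
Proof. by rewrite -card_irr_deg_q -sumr_const; apply: eq_bigr => i /eqP. Qed.

Local Notation D := (G^`(1))%G.
Local Notation Theta := ('Res[D] (\sum_(j | d j == q%:R) 'chi_j)).

Lemma ThetaE g : g \in G' -> Theta g = theta g.
Proof. by move=> G'g; rewrite cfResE ?der_sub // sum_cfunE. Qed.

Lemma Theta_char : Theta \is a character.
Proof. by rewrite cfRes_char // rpred_sum // => j _; apply: irr_char. Qed.

Lemma sum_der1_theta (f : gT -> algC) :
  \sum_(x in G') theta x * f x =
    q%:R *+ q.-1 * f 1%g - (q.-1)%:R * \sum_(x in E | x != 1%g) f x.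
Proof.
rewrite (big_setID E) /= (setIidPr cfker_chi_sub_der1) [X in _ + X]big1 ?addr0.
  rewrite (bigD1 1%g) ?group1 //= theta1; congr (_ + _).
  rewrite mulr_sumr -sumrN; apply: eq_bigr => x /andP[Ex ntx].
  by rewrite theta_cfker // mulNr.
by move=> x /setDP[G'x nEx]; rewrite theta_der1_out_cfker ?mul0r.
Qed.

Lemma cfnorm_Theta : '[Theta] = ((q.-1) ^ 2)%:R.
Proof.
rewrite cfdotE (eq_bigr (fun x => theta x * (theta x)^*)) => [|x G'x]; last by rewrite ThetaE.
rewrite sum_der1_theta theta1 (eq_bigr (fun=> - (q.-1)%:R)) => [|x /andP[Ex ntx]]; last first.
  by rewrite theta_cfker // conj_intr // rpredN rpred_nat.
have card_E1 : #|[pred x | (x \in E) && (x != 1%g)]| = q.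
  have := cardD1 1%g E; rewrite group1 card_cfker_chi add1n => -[->].
  by apply: eq_card => x; rewrite !inE andbC.
rewrite sumr_const card_E1 card_der1 conj_intr ?rpredMn ?rpred_nat ?rpred1 //.
rewrite -(mulr_natr (q%:R) q.-1) -(mulr_natr (1 *- q.-1) q) natrX !natrM mulrSr.
by field; rewrite q_neq0 andbT natr1 pnatr_eq0.
Qed.

Lemma cfdot_Theta_irr k :
  q%:R * '[Theta, 'chi[D]_k] =
    (q.-1)%:R * ('chi[D]_k 1%g - '['Res[cfker_group chi] 'chi[D]_k, 1]).
Proof.
set n := '[Theta, _]; set c := '[_, 1]; set f := 'chi_k 1%g.
have c_real : c^* = c by rewrite conj_natr // Cnat_cfdot_char ?cfRes_char ?irr_char ?cfun1_char.
have f_real : f^* = f by rewrite conj_natr // Cnat_irr1.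
have sum_E : \sum_(x in E | x != 1%g) ('chi_k x)^* = (q.+1)%:R * c - f.
  have : \sum_(x in E) ('chi_k x)^* = #|E|%:R * '[1, 'Res[cfker_group chi] 'chi_k].
    rewrite cfdotE mulrA mulfV ?neq0CG // mul1r; apply: eq_bigr => x Ex.
    by rewrite cfun1E Ex mul1r cfResE // cfker_chi_sub_der1.
  rewrite cfdotC -/c c_real card_cfker_chi (bigD1 1%g) ?group1 //= -/f f_real => <-.
  by ring.
have : #|D|%:R * n = \sum_(x in G') theta x * ('chi_k x)^*.
  rewrite /n cfdotE mulrA mulfV ?neq0CG // mul1r.
  by apply: eq_bigr => x G'x; rewrite ThetaE.
rewrite sum_der1_theta card_der1 sum_E f_real.
have nz_q1 : (q.+1)%:R != 0 :> algC by rewrite pnatr_eq0.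
move=> n_eq; apply: (mulfI nz_q1); move: n_eq.
rewrite -(mulr_natr (q%:R) q.-1) !natrM !mulrSr => n_eq.
by rewrite mulrA [_ * q%:R]mulrC -mulrSr mulrSr n_eq; ring.
Qed.

Lemma cfdot_Theta_irr_dvd k : exists m, '[Theta, 'chi[D]_k] = (m * q.-1)%:R.
Proof.
have := cfdot_Theta_irr k.
have [a ->] := natrP (Cnat_cfdot_char Theta_char (irr_char k)).
have [f ->] := natrP (Cnat_irr1 k).
have [b ->] := natrP (Cnat_cfdot_char (cfRes_char (cfker_group chi) (irr_char k)) (cfun1_char _)).
move=> eq_ab.
have eq_nat : (q * a + q.-1 * b = q.-1 * f)%N.
  by apply/eqP; rewrite -(eqr_nat algC) !natrD !natrM eq_ab; apply/eqP; ring.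
have : (q.-1 %| q * a)%N.
  have -> : (q * a = q.-1 * f - q.-1 * b)%N by lia.
  by rewrite -mulnBr dvdn_mulr.
rewrite Gauss_dvdr; last by rewrite -{2}(prednK (_ : 0 < q)%N) ?coprimenS //; lia.
by case/dvdnP=> m ->; exists m.
Qed.

(* [Theta] is [q - 1] times an irreducible [phi], which vanishes wherever
   [theta] does, and the restriction of each summand of [Theta] is a multiple
   of [phi]. *)
Lemma irr_deg_q_vanish j g : d j = q%:R -> g \in G' -> g \notin E -> 'chi_j g = 0.
Proof.
move=> deg_j G'g nEg.
have [|k0 Theta_k0] := char_scale_irr_of_norm Theta_char _ cfnorm_Theta cfdot_Theta_irr_dvd.
  by lia.
have phi_g : 'chi[D]_k0 g = 0.
  have := ThetaE G'g; rewrite theta_der1_out_cfker // Theta_k0 cfunE => /eqP.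
  by rewrite mulf_eq0 (negbTE q1_neq0) => /eqP.
have Res_sum : \sum_(i | d i == q%:R) 'Res[D] 'chi_i = (q.-1)%:R *: 'chi[D]_k0.
  by rewrite -linear_sum.
rewrite -(cfResE _ (der_sub 1 G) G'g) (char_summand_scale_irr _ Res_sum (i := j)).
- by rewrite cfunE phi_g mulr0.
- by move=> i _; rewrite cfRes_char ?irr_char.
- by rewrite deg_j.
Qed.

Lemma cent1_der1_out_cfker g : g \in G' -> g \notin E -> #|'C_G[g]%g| = q.
Proof.
move=> G'g nEg; have Gg := subsetP (der_sub 1 G) g G'g.
have := second_orthogonality_relation g Gg; rewrite class_refl mulr1n sum_irr_split.
rewrite (eq_bigr (fun=> 1)) => [|i /eqP deg_i]; last by rewrite lin_irr_der1 // conjC1 mulr1.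
rewrite [X in _ + X]big1 => [|j /eqP deg_j]; last by rewrite irr_deg_q_vanish ?mul0r.
rewrite sumr_const card_irr_deg1 chi_der1_out_cfker // conj_intr ?rpredN ?rpred1 //.
rewrite mulN1r opprK addr0 -[1 *+ q.-1 + 1]mulrSr => /eqP; rewrite eqr_nat => /eqP <-.
by lia.
Qed.

Lemma target_degrees_chi_absurd : False.
Proof.
apply: (@no_normal_pair_with_centralizers _ G D (cfker_group chi) q).
- by lia.
- by [].
- exact: der_normal.
- exact: cfker_normal.
- exact: cfker_chi_sub_der1.
- exact: card_G.
- exact: card_der1.
- exact: card_cfker_chi.
- by move=> g /setDP[G'g nEg]; apply: cent1_der1_out_cfker.
Qed.

End CharacterOfDegreeQ1.

Lemma target_degrees_absurd : False.
Proof. by have [i0 /target_degrees_chi_absurd] := irr_deg_q1_exists. Qed.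
End TargetDegrees.

Local Close Scope ring_scope.

Theorem mainTheorem10 (h : nat) (h_gt1 : (1 < h)%N) :
  forall (gT : finGroupType) (G : {group gT}),
    ~ perm_eq (irr_degrees G) (target_degrees (2 ^ h)).
Proof.
move=> gT G; apply: (@target_degrees_absurd gT G (2 ^ h)).
  by rewrite -[4]/(2 ^ 2) leq_exp2l.
by rewrite oddX negb_or /= andbT -lt0n ltnW.
Qed.
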